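(* The map $\phi_s : \mathbf{ASM} \to \mathbb{K}(q)$ linearly defined, for any $s \in \{\operatorname{io}, \operatorname{oi}\}$ and any ASM $\delta$ of size $n$ by $\phi_s(\mathbf{F}_{M^\delta}) := \frac{q^{s(\delta)}}{n!}$ is an algebra morphism.
   Context: Let $\mathbb{K}$ be a field of characteristic zero. An alternating sign matrix (ASM) of size $n$ is an $n\times n$ matrix with entries in $\{0,+,-\}$ such that every row and column starts and ends (ignoring zeros) with $+$ and in each row and column the $+$ and $-$ alternate. For an ASM $\delta$, $M^\delta$ is the $\{0,1\}$-matrix with $M^\delta_{ij}=1$ iff $\delta_{ij}\ne 0$. $\mathbf{PM}_1$ is the Hopf algebra with basis $(\mathbf{F}_M)$ indexed by $\{0,1\}$-square matrices with no null row or column, with product $\mathbf{F}_{M_1}\cdot\mathbf{F}_{M_2} = \sum \mathbf{F}_M$ over all $M$ obtained by shuffling the columns of $M_1$ (with an $n_2\times n_1$ zero block placed below) with the columns of $M_2$ (with an $n_1 \times n_2$ zero block placed above), $n_i$ the sizes. $\mathbf{ASM}$ is the Hopf subalgebra of $\mathbf{PM}_1$ spanned by the $\mathbf{F}_{M^\delta}$, graded by the size of $\delta$. Via the bijection between ASMs and six-vertex configurations with domain wall boundary conditions, a $+$ entry corresponds to a vertex of type $\operatorname{oi}$ and a $-$ entry to a vertex of type $\operatorname{io}$; thus $\operatorname{oi}(\delta)$ is the number of $+$ entries of $\delta$ and $\operatorname{io}(\delta)$ is the number of $-$ entries of $\delta$. *)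

From HB Require Import structures.
From mathcomp Require Import all_boot all_order all_algebra.
From mathcomp Require Import finmap.
From mathcomp.multinomials Require Import monalg.
Set Implicit Arguments. Unset Strict Implicit. Unset Printing Implicit Defensive.
Import Order.TTheory GRing.Theory Num.Theory.
Local Open Scope ring_scope.

(* Entries in {0,+,-} are encoded as option bool:
   None = 0, Some true = +, Some false = -.                                   *)
Definition signmx (n : nat) := 'M[option bool]_n.

(* A line (row or column, read in order) is alternating when, ignoring zeros,
   it reads + - + - ... + : odd length, and + at even positions, - at odd.   *)
Definition alt_line (l : seq (option bool)) : bool :=
  let s := pmap id l in
  odd (size s) && (s == [seq ~~ odd i | i <- iota 0 (size s)]).

Definition is_ASM (n : nat) (d : signmx n) : bool :=
  [forall i : 'I_n, alt_line [seq d i j | j <- enum 'I_n]] &&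
  [forall j : 'I_n, alt_line [seq d i j | i <- enum 'I_n]].

Definition supp_mx (n : nat) (d : signmx n) : 'M[bool]_n :=
  \matrix_(i, j) (d i j != None).

Inductive stat := io | oi.
Definition stat_val (s : stat) (n : nat) (d : signmx n) : nat :=
  match s with
  | oi => #|[set ij : 'I_n * 'I_n | d ij.1 ij.2 == Some true]|
  | io => #|[set ij : 'I_n * 'I_n | d ij.1 ij.2 == Some false]|
  end.

Definition PMidx := {n : nat & 'M[bool]_n}.
Definition PMidx_of (n : nat) (M : 'M[bool]_n) : PMidx := Tagged (fun n => 'M[bool]_n) M.

Definition PM (K : fieldType) := {malg K[PMidx]}.
Definition FM (K : fieldType) (n : nat) (M : 'M[bool]_n) : PM K := << PMidx_of M >>.

Definition mget (n : nat) (M : 'M[bool]_n) (i j : nat) : bool :=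
  match (insub i : option 'I_n), (insub j : option 'I_n) with
  | Some i', Some j' => M i' j'
  | _, _ => false
  end.

Definition rank_in (m : nat) (A : {set 'I_m}) (j : 'I_m) : nat :=
  #|[set k in A | (k < j)%N]|.

(* The column shuffle: the columns at positions in S (in increasing order) are
   the columns of M1 with an n2 x n1 zero block placed below, the remaining
   columns are the columns of M2 with an n1 x n2 zero block placed above.    *)
Definition shuffle_mx (n1 n2 : nat) (M1 : 'M[bool]_n1) (M2 : 'M[bool]_n2)
    (S : {set 'I_(n1 + n2)}) : 'M[bool]_(n1 + n2) :=
  \matrix_(i, j)
    if j \in S then (i < n1)%N && mget M1 i (rank_in S j)
    else (n1 <= i)%N && mget M2 (i - n1) (rank_in (~: S) j).

Definition PMprod_basis (K : fieldType) (x y : PMidx) : PM K :=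
  \sum_(S : {set 'I_(tag x + tag y)} | #|S| == tag x)
     FM K (shuffle_mx (tagged x) (tagged y) S).

Definition PMmul (K : fieldType) (a b : PM K) : PM K :=
  \sum_(x <- msupp a) \sum_(y <- msupp b) (a@_x * b@_y) *: PMprod_basis K x y.

Definition PMone (K : fieldType) : PM K := FM K (0 : 'M[bool]_0).

Definition is_ASM_supp (x : PMidx) : Prop :=
  exists d : signmx (tag x), is_ASM d /\ supp_mx d = tagged x.

Definition in_ASM (K : fieldType) (a : PM K) : Prop :=
  forall x, x \in msupp a -> is_ASM_supp x.

Definition KQ (K : fieldType) := {fraction {poly K}}.
Notation "x %:F" := (@tofrac _ x).
Definition qvar (K : fieldType) : KQ K := ('X : {poly K})%:F.

(* value on a basis index: the (unique) ASM delta with M^delta = M is picked;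
   value q^{s(delta)} / n!  (0 on indices that are not ASM supports,
   which are outside the domain ASM anyway) *)
Definition phi_basis (K : fieldType) (s : stat) (x : PMidx) : KQ K :=
  match [pick d : signmx (tag x) | is_ASM d && (supp_mx d == tagged x)] with
  | Some d => qvar K ^+ stat_val s d / ((tag x)`!)%:R
  | None => 0
  end.

Definition phi (K : fieldType) (s : stat) (a : PM K) : KQ K :=
  \sum_(x <- msupp a) ((a@_x)%:P)%:F * phi_basis K s x.

From HB Require Import structures.
From mathcomp Require Import all_boot all_order all_algebra.
From mathcomp Require Import finmap.
From mathcomp.multinomials Require Import monalg.
From mathcomp Require Import ring.
Set Implicit Arguments. Unset Strict Implicit. Unset Printing Implicit Defensive.
Import GRing.Theory.

(* Signs along a line of an ASM alternate, so an ASM is determined by its zero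
   pattern and phi_s is well defined on the basis F_{M^delta}.  Shuffling the
   columns of two ASMs delta1, delta2 themselves (with their zero blocks) gives
   an ASM whose support is the corresponding shuffle of supports and whose
   nonzero entries are those of delta1 and delta2.  Hence each of the
   C(n1 + n2, n1) terms of F_{M^delta1} F_{M^delta2} has value
   q^(s(delta1) + s(delta2)) / (n1 + n2)!, and C(n1 + n2, n1) / (n1 + n2)! is
   1 / (n1! n2!). *)

Definition nth_mx (T : Type) (x0 : T) n (M : 'M[T]_n) (i j : nat) : T :=
  match (insub i : option 'I_n), (insub j : option 'I_n) with
  | Some i', Some j' => M i' j'
  | _, _ => x0
  end.

Lemma nth_mxE (T : Type) (x0 : T) n (M : 'M[T]_n) (i j : 'I_n) : nth_mx x0 M i j = M i j.
Proof. by rewrite /nth_mx !valK. Qed.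

Lemma nth_mx_matrix (T : Type) (x0 : T) n (f : nat -> nat -> T) i j : i < n -> j < n ->
  nth_mx x0 (\matrix_(i0 < n, j0 < n) f i0 j0)%R i j = f i j.
Proof.
move=> lt_i lt_j; rewrite /nth_mx.
case: insubP => [i' _ <-|]; last by rewrite lt_i.
by case: insubP => [j' _ <-|]; [rewrite mxE | rewrite lt_j].
Qed.

Lemma mget_supp_mx n (d : signmx n) i j : mget (supp_mx d) i j = (nth_mx None d i j != None).
Proof.
rewrite /mget /nth_mx.
by case: (insub i) => [i'|] //; case: (insub j) => [j'|] //; rewrite mxE.
Qed.

Definition row_seq n (d : signmx n) (i : nat) := [seq nth_mx None d i j | j <- iota 0 n].
Definition col_seq n (d : signmx n) (j : nat) := [seq nth_mx None d i j | i <- iota 0 n].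

Lemma is_ASM_lines n (d : signmx n) :
  is_ASM d = [forall i : 'I_n, alt_line (row_seq d i)] &&
             [forall j : 'I_n, alt_line (col_seq d j)].
Proof.
by congr andb; apply: eq_forallb => k; congr alt_line;
  rewrite /row_seq /col_seq -val_enum_ord -map_comp; apply: eq_map => l /=; rewrite nth_mxE.
Qed.

Lemma alt_line_pmap (l l' : seq (option bool)) : pmap id l = pmap id l' ->
  alt_line l = alt_line l'.
Proof. by rewrite /alt_line => ->. Qed.

Lemma eq_alternating_supp (l l' : seq (option bool)) k :
  [seq o != None | o <- l] = [seq o != None | o <- l'] ->
  pmap id l = [seq ~~ odd i | i <- iota k (size (pmap id l))] ->
  pmap id l' = [seq ~~ odd i | i <- iota k (size (pmap id l'))] -> l = l'.
Proof.
elim: l l' k => [|a l IH] [|b l'] k //= [eab eq_supp].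
case: a b eab => [a|] [b|] //= _.
  by move=> [-> alt_l] [-> alt_l']; congr (_ :: _); apply: (IH l' k.+1).
by move=> alt_l alt_l'; congr (_ :: _); apply: (IH l' k).
Qed.

Lemma ASM_supp_inj n (d d' : signmx n) :
  is_ASM d -> is_ASM d' -> supp_mx d = supp_mx d' -> d = d'.
Proof.
rewrite !is_ASM_lines => /andP[/forallP alt_d _] /andP[/forallP alt_d' _] eq_supp.
apply/matrixP => i j; rewrite -!(nth_mxE None).
have eq_row : row_seq d i = row_seq d' i.
  move: (alt_d i) (alt_d' i) => /andP[_ /eqP alt_r] /andP[_ /eqP alt_r'].
  apply: (eq_alternating_supp _ alt_r alt_r'); rewrite -!map_comp.
  by apply: eq_map => k /=; rewrite -!mget_supp_mx eq_supp.
have := congr1 (nth None^~ j) eq_row.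
by rewrite !(nth_map 0) ?size_iota // nth_iota.
Qed.

Definition nat_mem m (A : {set 'I_m}) (k : nat) : bool :=
  if (insub k : option 'I_m) is Some k' then k' \in A else false.

Lemma nat_memE m (A : {set 'I_m}) (k : 'I_m) : nat_mem A k = (k \in A).
Proof. by rewrite /nat_mem valK. Qed.

Lemma nat_memC m (A : {set 'I_m}) (k : nat) : k < m -> nat_mem (~: A) k = ~~ nat_mem A k.
Proof. by move=> lt_k; rewrite /nat_mem insubT /= inE. Qed.

Lemma index_iota0 n : index_iota 0 n = iota 0 n.
Proof. by rewrite /index_iota subn0. Qed.

Lemma card_nat_mem_lt m (A : {set 'I_m}) j : j <= m ->
  #|[set k in A | k < j]| = count (nat_mem A) (iota 0 j).
Proof.
move=> le_j; rewrite -sum1_count -sum1dep_card.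
rewrite -index_iota0 (big_nat_widen _ _ _ _ _ le_j) big_mkord.
by apply: eq_bigl => k; rewrite nat_memE.
Qed.

Lemma card_nat_mem m (A : {set 'I_m}) : #|A| = count (nat_mem A) (iota 0 m).
Proof. by rewrite -card_nat_mem_lt //; apply: eq_card => k; rewrite !inE ltn_ord andbT. Qed.

Lemma rank_inE m (A : {set 'I_m}) (j : 'I_m) : rank_in A j = count (nat_mem A) (iota 0 j).
Proof. by rewrite /rank_in card_nat_mem_lt // ltnW. Qed.

Lemma count_iota_lt (P : pred nat) j m : P j -> j < m ->
  count P (iota 0 j) < count P (iota 0 m).
Proof.
move=> Pj lt_jm; have -> : m = j + 1 + (m - j.+1) by rewrite addn1 subnKC.
by rewrite !iotaD !count_cat /= Pj -addnA -[X in X < _]addn0 ltn_add2l.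
Qed.

Lemma pmap_spread (P : pred nat) (h : nat -> option bool) m :
  pmap id [seq if P j then h (count P (iota 0 j)) else None | j <- iota 0 m]
  = pmap id [seq h k | k <- iota 0 (count P (iota 0 m))].
Proof.
elim: m => // m IH; rewrite -addn1 iotaD map_cat pmap_cat count_cat IH /= add0n.
case: (P m) => /=; last by rewrite cats0 !addn0.
by rewrite addn1 -addn1 iotaD map_cat pmap_cat /= add0n.
Qed.

Lemma pmap_nones (T U : Type) (s : seq U) : pmap id [seq None : option T | _ <- s] = [::].
Proof. by elim: s. Qed.

Definition shuffle_entry n1 n2 (d1 : signmx n1) (d2 : signmx n2) (S : {set 'I_(n1 + n2)})
    (i j : nat) : option bool :=
  if nat_mem S j then
    if i < n1 then nth_mx None d1 i (count (nat_mem S) (iota 0 j)) else None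
  else
    if n1 <= i then nth_mx None d2 (i - n1) (count (nat_mem (~: S)) (iota 0 j)) else None.

Definition shuffle_signmx n1 n2 (d1 : signmx n1) (d2 : signmx n2) (S : {set 'I_(n1 + n2)}) :
  signmx (n1 + n2) := (\matrix_(i, j) shuffle_entry d1 d2 S i j)%R.

Section ShuffleSignMatrix.
Variables (n1 n2 : nat) (d1 : signmx n1) (d2 : signmx n2) (S : {set 'I_(n1 + n2)}).
Hypothesis card_S : #|S| = n1.

Local Notation d := (shuffle_signmx d1 d2 S).

Lemma supp_shuffle_signmx : supp_mx d = shuffle_mx (supp_mx d1) (supp_mx d2) S.
Proof.
apply/matrixP => i j; rewrite !mxE /shuffle_entry nat_memE !rank_inE !mget_supp_mx.
by case: (j \in S); case: ltnP.
Qed.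

Lemma row_seq_shuffle i : i < n1 + n2 ->
  row_seq d i = [seq shuffle_entry d1 d2 S i j | j <- iota 0 (n1 + n2)].
Proof.
by move=> lt_i; apply/eq_in_map => j; rewrite mem_iota => /andP[_ lt_j]; rewrite nth_mx_matrix.
Qed.

Lemma col_seq_shuffle j : j < n1 + n2 ->
  col_seq d j = [seq shuffle_entry d1 d2 S i j | i <- iota 0 (n1 + n2)].
Proof.
by move=> lt_j; apply/eq_in_map => i; rewrite mem_iota => /andP[_ lt_i]; rewrite nth_mx_matrix.
Qed.

Lemma card_setC_shuffle : #|~: S| = n2.
Proof. by apply/eqP; rewrite -(eqn_add2l n1) -{1}card_S cardsC card_ord. Qed.

Lemma row_shuffle_top i : i < n1 -> pmap id (row_seq d i) = pmap id (row_seq d1 i).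
Proof.
move=> lt_i; rewrite row_seq_shuffle ?ltn_addr //.
rewrite (eq_map (g := fun j => if nat_mem S j then
    nth_mx None d1 i (count (nat_mem S) (iota 0 j)) else None)); last first.
  by move=> j; rewrite /shuffle_entry lt_i leqNgt lt_i; case: nat_mem.
by rewrite pmap_spread -card_nat_mem card_S.
Qed.

Lemma row_shuffle_bottom i : n1 <= i -> i < n1 + n2 ->
  pmap id (row_seq d i) = pmap id (row_seq d2 (i - n1)).
Proof.
move=> le_i lt_i; rewrite row_seq_shuffle //.
rewrite (eq_in_map _ (fun j => if nat_mem (~: S) j then
    nth_mx None d2 (i - n1) (count (nat_mem (~: S)) (iota 0 j)) else None) _).1; last first.
  move=> j; rewrite mem_iota => /andP[_ lt_j].
  by rewrite /shuffle_entry nat_memC // ltnNge le_i; case: nat_mem.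
by rewrite pmap_spread -card_nat_mem card_setC_shuffle.
Qed.

Lemma col_shuffle_left j : j < n1 + n2 -> nat_mem S j ->
  pmap id (col_seq d j) = pmap id (col_seq d1 (count (nat_mem S) (iota 0 j))).
Proof.
move=> lt_j Sj; rewrite col_seq_shuffle // iotaD map_cat pmap_cat add0n.
rewrite (eq_in_map _ (fun=> None) (iota n1 n2)).1 ?pmap_nones ?cats0; last first.
  by move=> i; rewrite mem_iota => /andP[le_i _]; rewrite /shuffle_entry Sj ltnNge le_i.
congr (pmap id _); apply/eq_in_map => i; rewrite mem_iota => /andP[_ lt_i].
by rewrite /shuffle_entry Sj lt_i.
Qed.

Lemma col_shuffle_right j : j < n1 + n2 -> ~~ nat_mem S j ->
  pmap id (col_seq d j) = pmap id (col_seq d2 (count (nat_mem (~: S)) (iota 0 j))).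
Proof.
move=> lt_j notSj; rewrite col_seq_shuffle // iotaD map_cat pmap_cat add0n.
rewrite (eq_in_map _ (fun=> None) (iota 0 n1)).1 ?pmap_nones /=; last first.
  move=> i; rewrite mem_iota => /andP[_ lt_i].
  by rewrite /shuffle_entry (negbTE notSj) leqNgt lt_i.
congr (pmap id _); rewrite -[n1 in iota n1]addn0 iotaDl -map_comp.
by apply/eq_map => i /=; rewrite /shuffle_entry (negbTE notSj) leq_addr addKn.
Qed.

Lemma shuffle_signmx_ASM : is_ASM d1 -> is_ASM d2 -> is_ASM d.
Proof.
rewrite !is_ASM_lines => /andP[/forallP row1 /forallP col1] /andP[/forallP row2 /forallP col2].
apply/andP; split; apply/forallP => k.
  case: (ltnP k n1) => [lt_k | le_k].
    by rewrite (alt_line_pmap (row_shuffle_top lt_k)); apply: (row1 (Ordinal lt_k)).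
  have lt_k' : k - n1 < n2 by rewrite ltn_subLR.
  by rewrite (alt_line_pmap (row_shuffle_bottom le_k (ltn_ord k))); apply: (row2 (Ordinal lt_k')).
case: (boolP (nat_mem S k)) => [Sk | notSk].
  have lt_r : count (nat_mem S) (iota 0 k) < n1.
    by rewrite -[X in _ < X]card_S card_nat_mem count_iota_lt.
  by rewrite (alt_line_pmap (col_shuffle_left (ltn_ord k) Sk)); apply: (col1 (Ordinal lt_r)).
have lt_r : count (nat_mem (~: S)) (iota 0 k) < n2.
  by rewrite -[X in _ < X]card_setC_shuffle card_nat_mem count_iota_lt ?nat_memC.
by rewrite (alt_line_pmap (col_shuffle_right (ltn_ord k) notSk)); apply: (col2 (Ordinal lt_r)).
Qed.

End ShuffleSignMatrix.

Definition stat_sign (s : stat) : bool := if s is oi then true else false.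

Lemma count_pmap_id (T : eqType) (x : T) (l : seq (option T)) :
  count (pred1 (Some x)) l = count (pred1 x) (pmap id l).
Proof. by elim: l => //= [[y|] l IH] /=; rewrite IH. Qed.

Lemma stat_val_rows s n (d : signmx n) :
  stat_val s d = \sum_(i < n) count (pred1 (stat_sign s)) (pmap id (row_seq d i)).
Proof.
have -> : stat_val s d = #|[set ij : 'I_n * 'I_n | d ij.1 ij.2 == Some (stat_sign s)]|.
  by case: s.
rewrite -sum1dep_card (eq_bigl (fun ij => xpredT ij.1 && (d ij.1 ij.2 == Some (stat_sign s)))) //.
rewrite -(pair_big_dep xpredT (fun i j => d i j == Some (stat_sign s)) (fun _ _ => 1)).
apply: eq_bigr => i _; rewrite -count_pmap_id count_map -sum1_count.
rewrite (eq_bigl (fun j : 'I_n => nth_mx None d i j == Some (stat_sign s))) => [|j]; last first.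
  by rewrite nth_mxE.
by rewrite -index_iota0 big_mkord.
Qed.

Lemma stat_val_shuffle s n1 n2 (d1 : signmx n1) (d2 : signmx n2) (S : {set 'I_(n1 + n2)}) :
  #|S| = n1 -> stat_val s (shuffle_signmx d1 d2 S) = stat_val s d1 + stat_val s d2.
Proof.
move=> card_S; rewrite !stat_val_rows big_split_ord.
congr (_ + _); apply: eq_bigr => i _ /=; first by rewrite row_shuffle_top.
by rewrite row_shuffle_bottom ?leq_addr ?ltn_add2l // addKn.
Qed.

Local Open Scope ring_scope.

Lemma phi_over (K : fieldType) s (a : PM K) (r : seq PMidx) :
  uniq r -> {subset msupp a <= r} ->
  phi s a = \sum_(x <- r) ((a@_x)%:P)%:F * phi_basis K s x.
Proof.
move=> uniq_r supp_r; rewrite (bigID (mem (msupp a))) /=.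
rewrite [X in _ = _ + X]big1 ?addr0 => [|x /mcoeff_outdom ->]; last first.
  by rewrite polyC0 tofrac0 mul0r.
rewrite -big_filter /phi; apply/perm_big/uniq_perm; rewrite ?filter_uniq //.
by move=> x; rewrite mem_filter; case: (boolP (x \in msupp a)) => // /supp_r ->.
Qed.

Lemma phi_lin (K : fieldType) s (c : K) (a b : PM K) :
  phi s (c *: a + b) = (c%:P)%:F * phi s a + phi s b.
Proof.
pose r := undup (msupp a ++ msupp b).
have uniq_r : uniq r by apply: undup_uniq.
have sub_a : {subset msupp a <= r} by move=> x xa; rewrite mem_undup mem_cat xa.
have sub_b : {subset msupp b <= r} by move=> x xb; rewrite mem_undup mem_cat xb orbT.
have sub_cab : {subset msupp (c *: a + b) <= r}.
  move=> x /(fsubsetP (msuppD_le _ _)); rewrite in_fsetU => /orP[/(fsubsetP (msuppZ_le _ _))|].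
    exact: sub_a.
  exact: sub_b.
rewrite (phi_over s uniq_r sub_a) (phi_over s uniq_r sub_b) (phi_over s uniq_r sub_cab).
rewrite mulr_sumr -big_split /=; apply: eq_bigr => x _.
by rewrite mcoeffD mcoeffZ polyCD polyCM tofracD tofracM mulrDl mulrA.
Qed.

Lemma phi0 (K : fieldType) s : phi s (0 : PM K) = 0.
Proof. by rewrite /phi msupp0 big_nil. Qed.

Lemma phiZ (K : fieldType) s (c : K) (a : PM K) : phi s (c *: a) = (c%:P)%:F * phi s a.
Proof. by rewrite -[c *: a]addr0 phi_lin phi0 addr0. Qed.

Lemma phiD (K : fieldType) s (a b : PM K) : phi s (a + b) = phi s a + phi s b.
Proof. by rewrite -[a in LHS]scale1r phi_lin polyC1 tofrac1 mul1r. Qed.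

Lemma phi_sum (K : fieldType) s (I : Type) (r : seq I) (P : pred I) (F : I -> PM K) :
  phi s (\sum_(i <- r | P i) F i) = \sum_(i <- r | P i) phi s (F i).
Proof. exact: (big_morph _ (@phiD K s) (@phi0 K s)). Qed.

Lemma phiU (K : fieldType) s (x : PMidx) : phi s (<< x >> : PM K) = phi_basis K s x.
Proof.
by rewrite /phi msuppU oner_eq0 big_seq_fset1 mcoeffU eqxx mulr1n polyC1 tofrac1 mul1r.
Qed.

Lemma phi_basis_ASM (K : fieldType) s n (d : signmx n) : is_ASM d ->
  phi_basis K s (PMidx_of (supp_mx d)) = qvar K ^+ stat_val s d / (n`!)%:R.
Proof.
move=> ASM_d; rewrite /phi_basis /=.
case: pickP => [d' /andP[ASM_d' /eqP supp_d'] | /(_ d)]; last by rewrite ASM_d eqxx.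
by rewrite (ASM_supp_inj ASM_d' ASM_d supp_d').
Qed.

Lemma pchar0_KQ (K : fieldType) : [pchar K] =i pred0 -> [pchar KQ K] =i pred0.
Proof.
move=> /pcharf0P charK; apply/pcharf0P => n.
by rewrite -tofrac1 -tofracMn tofrac_eq0 -polyC1 -polyCMn polyC_eq0 charK.
Qed.

Lemma binomial_fact_div (F : fieldType) (x y : F) n1 n2 : [pchar F] =i pred0 ->
  x * y / ((n1 + n2)`!)%:R *+ 'C(n1 + n2, n1) = x / (n1`!)%:R * (y / (n2`!)%:R).
Proof.
move=> /pcharf0P charF.
have nz_fact n : (n`!%:R : F) != 0 by rewrite charF -lt0n fact_gt0.
have nz_bin : ('C(n1 + n2, n1)%:R : F) != 0 by rewrite charF -lt0n bin_gt0 leq_addr.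
rewrite -(bin_fact (leq_addr n2 n1)) addKn !natrM -mulr_natr.
by field; rewrite nz_bin !nz_fact.
Qed.

Lemma phi_prod_basis (K : fieldType) s n1 n2 (d1 : signmx n1) (d2 : signmx n2) :
  [pchar K] =i pred0 -> is_ASM d1 -> is_ASM d2 ->
  phi s (PMprod_basis K (PMidx_of (supp_mx d1)) (PMidx_of (supp_mx d2))) =
  phi_basis K s (PMidx_of (supp_mx d1)) * phi_basis K s (PMidx_of (supp_mx d2)).
Proof.
move=> charK ASM_d1 ASM_d2; rewrite !phi_basis_ASM // /PMprod_basis phi_sum /=.
under eq_bigr => S /eqP card_S.
  rewrite /FM phiU -supp_shuffle_signmx phi_basis_ASM ?shuffle_signmx_ASM //.
  rewrite stat_val_shuffle // exprD.
over.
rewrite (eq_bigl (fun S => S \in [set S : {set 'I_(n1 + n2)} | #|S| == n1])); last first.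
  by move=> S; rewrite inE.
by rewrite sumr_const card_draws card_ord; apply/binomial_fact_div/pchar0_KQ.
Qed.

Lemma phi_one (K : fieldType) s : phi s (PMone K) = 1.
Proof.
pose d0 : signmx 0 := (\matrix_(i, j) None)%R.
have supp_d0 : (0 : 'M[bool]_0) = supp_mx d0 by apply/matrixP => -[].
have ASM_d0 : is_ASM d0 by apply/andP; split; apply/forallP => -[].
by rewrite /PMone /FM phiU supp_d0 phi_basis_ASM // stat_val_rows big_ord0 fact0 divr1.
Qed.

Lemma phi_mul (K : fieldType) s (a b : PM K) : [pchar K] =i pred0 ->
  in_ASM a -> in_ASM b -> phi s (PMmul a b) = phi s a * phi s b.
Proof.
move=> charK ASM_a ASM_b; rewrite {2 3}/phi big_distrlr /PMmul phi_sum /=.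
rewrite !big_seq; apply: eq_bigr => x a_x; rewrite phi_sum !big_seq.
apply: eq_bigr => y b_y; rewrite phiZ polyCM tofracM mulrACA.
have [[d1 [ASM_d1 supp_d1]] [d2 [ASM_d2 supp_d2]]] := (ASM_a x a_x, ASM_b y b_y).
case: x d1 supp_d1 {a_x} ASM_d1 => n1 M1 /= d1 <- ASM_d1.
case: y d2 supp_d2 {b_y} ASM_d2 => n2 M2 /= d2 <- ASM_d2.
by rewrite phi_prod_basis.
Qed.

Theorem proposition4p3 (K : fieldType) (charK : [pchar K] =i pred0) (s : stat) :
  phi s (PMone K) = 1 /\
  (forall (c : K) (a b : PM K), phi s (c *: a + b) = ((c%:P)%:F) * phi s a + phi s b) /\
  (forall a b : PM K, in_ASM a -> in_ASM b ->
     phi s (PMmul a b) = phi s a * phi s b).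
Proof. by split; [exact: phi_one | split; [exact: phi_lin | move=> a b; exact: phi_mul]]. Qed.
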